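(* Let $X=[0,1[$, let $\widehat{\operatorname{PC}^{\bowtie}}$ be the group of all bijections $X\to X$ that are continuous outside a finite subset of $X$, and let $\operatorname{PC}^{\bowtie}=\widehat{\operatorname{PC}^{\bowtie}}/{\mathfrak S}_{\mathrm{fin}}$. Let $G$ be any subgroup of $\operatorname{PC}^{\bowtie}$. Then the Kapoudjian class of $G$ is zero; that is, the central extension $0\to \mathbb{Z}/2\mathbb{Z}={\mathfrak S}_{\mathrm{fin}}/{\mathfrak A}_{\mathrm{fin}}\to \widehat{G}/{\mathfrak A}_{\mathrm{fin}}\to G\to 1$ splits.
   Context: ${\mathfrak S}_{\mathrm{fin}}$ denotes the group of finitely supported permutations of $X$ (a normal subgroup of $\widehat{\operatorname{PC}^{\bowtie}}$ and of the group ${\mathfrak S}(X)$ of all bijections of $X$), and ${\mathfrak A}_{\mathrm{fin}}$ its subgroup of even permutations (kernel of the classical signature), which is normal in ${\mathfrak S}(X)$. For a subgroup $G$ of ${\mathfrak S}(X)/{\mathfrak S}_{\mathrm{fin}}$, $\widehat{G}$ denotes its inverse image in ${\mathfrak S}(X)$. The Kapoudjian class of $G$ is the class in $H^2(G,\mathbb{Z}/2\mathbb{Z})$ of the central extension $0\to {\mathfrak S}_{\mathrm{fin}}/{\mathfrak A}_{\mathrm{fin}}\cong\mathbb{Z}/2\mathbb{Z}\to \widehat{G}/{\mathfrak A}_{\mathrm{fin}}\to G\to 1$. *)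

From Stdlib Require Import Reals List Arith.
Open Scope R_scope.

Definition X : Type := {x : R | 0 <= x < 1}.
Definition xval (x : X) : R := proj1_sig x.

Definition Xmap := X -> X.
Definition comp (g h : Xmap) : Xmap := fun x => g (h x).
Definition is_inverse (f g : Xmap) : Prop :=
  (forall x, g (f x) = x) /\ (forall x, f (g x) = x).
Definition is_bij (f : Xmap) : Prop := exists g, is_inverse f g.

Definition cont_at (f : Xmap) (x : X) : Prop :=
  forall eps, 0 < eps -> exists delta, 0 < delta /\
    forall y : X, Rabs (xval y - xval x) < delta ->
      Rabs (xval (f y) - xval (f x)) < eps.

Definition PC_hat (f : Xmap) : Prop :=
  is_bij f /\ exists F : list X, forall x, ~ In x F -> cont_at f x.

Definition S_fin (f : Xmap) : Prop :=
  is_bij f /\ exists l : list X, forall x, f x <> x -> In x l.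

Definition swap (a b : X) : Xmap := fun x =>
  if Req_EM_T (xval x) (xval a) then b
  else if Req_EM_T (xval x) (xval b) then a else x.

Definition A_fin (f : Xmap) : Prop :=
  exists l : list (X * X),
    Nat.Even (length l) /\
    (forall p, In p l -> fst p <> snd p) /\
    forall x, f x = fold_right (fun p y => swap (fst p) (snd p) y) x l.

(** [cong_mod P g h] : g P = h P as left cosets, i.e. g^{-1} h \in P. *)
Definition cong_mod (P : Xmap -> Prop) (g h : Xmap) : Prop :=
  exists gi, is_inverse g gi /\ P (comp gi h).

Definition subgroup_PC_hat (H : Xmap -> Prop) : Prop :=
  (forall f, H f -> PC_hat f) /\
  H (fun x => x) /\
  (forall f g, H f -> H g -> H (comp f g)) /\
  (forall f g, H f -> is_inverse f g -> H g).

(** The Kapoudjian class of G = Hhat / S_fin vanishes: there is a group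
    homomorphism sigma : G -> Hhat / A_fin with pi o sigma = id.
    sigma is encoded by a representative Xmap s : sigma(g S_fin) = s(g) A_fin. *)
Definition kapoudjian_split (Hhat : Xmap -> Prop) : Prop :=
  exists s : Xmap -> Xmap,
    (forall g, Hhat g -> Hhat (s g)) /\
    (* well defined on G = Hhat / S_fin *)
    (forall g g', Hhat g -> Hhat g' -> cong_mod S_fin g g' ->
        cong_mod A_fin (s g) (s g')) /\
    (forall g h, Hhat g -> Hhat h ->
        cong_mod A_fin (s (comp g h)) (comp (s g) (s h))) /\
    (* section of the projection Hhat/A_fin -> Hhat/S_fin *)
    (forall g, Hhat g -> cong_mod S_fin g (s g)).

(* A signature [PC_hat -> Z/2] extending the classical one on S_fin splits the extension: a
   transposition [t] has signature 1, so [g |-> g] or [g |-> g t], whichever has signature 0,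
   is a section, multiplicative modulo A_fin = S_fin /\ ker signature.
   The signature of [f] is the parity of the inversions of [f] on a finite sample [S]: [E] is a
   finite set of cuts containing 0 and the discontinuities of [f], and [S] contains [E] and, in
   each gap of [E], a number of points congruent to 3 mod 4. On a gap [f] is a continuous
   injection, hence monotone, so whether two points form an inversion only depends on their
   types (a cut point, or the gap containing it). The parity therefore only depends on the type
   counts mod 4, so not on [S]; samples stay adapted when [E] is refined, so it does not depend
   on [E] either. Multiplicativity follows because [h] maps a sample adapted to [E] to one
   adapted to [h E] and inversions form a cocycle. *)

From Stdlib Require Import Reals List Lra Lia Bool Permutation Arith FinFun.
From Stdlib Require Import ProofIrrelevance Classical ClassicalEpsilon FunctionalExtensionality.
From Stdlib Require Import Ranalysis5.
Import ListNotations.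

Open Scope nat_scope.

(** * Parity of pairs *)

Fixpoint parity (l : list bool) : bool :=
  match l with [] => false | b :: l => xorb b (parity l) end.

Lemma parity_perm l l' : Permutation l l' -> parity l = parity l'.
Proof.
  induction 1; simpl; try congruence.
  destruct x, y, (parity l); reflexivity.
Qed.

Section PairParity.
Context {A : Type}.
Implicit Types (P : A -> A -> bool) (L : list A).

Lemma parity_map_xorb (f g : A -> bool) l :
  parity (map (fun z => xorb (f z) (g z)) l) = xorb (parity (map f l)) (parity (map g l)).
Proof.
  induction l as [|a l IH]; simpl; auto. rewrite IH.
  destruct (f a), (g a), (parity (map f l)), (parity (map g l)); reflexivity.
Qed.

Lemma parity_map_false (f : A -> bool) l :
  (forall z, In z l -> f z = false) -> parity (map f l) = false.
Proof.
  induction l as [|a l IH]; simpl; intros H; auto.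
  rewrite H, IH by auto. reflexivity.
Qed.

Fixpoint pair_parity P L : bool :=
  match L with
  | [] => false
  | a :: L' => xorb (parity (map (P a) L')) (pair_parity P L')
  end.

Lemma pair_parity_perm P L L' : (forall x y, P x y = P y x) ->
  Permutation L L' -> pair_parity P L = pair_parity P L'.
Proof.
  intros Psym. induction 1; simpl.
  - reflexivity.
  - rewrite IHPermutation, (parity_perm _ _ (Permutation_map (P x) H)). reflexivity.
  - rewrite (Psym y x).
    destruct (P x y), (parity (map (P x) l)), (parity (map (P y) l)), (pair_parity P l);
      reflexivity.
  - congruence.
Qed.

Lemma pair_parity_xorb P1 P2 L :
  pair_parity (fun x y => xorb (P1 x y) (P2 x y)) L = xorb (pair_parity P1 L) (pair_parity P2 L).
Proof.
  induction L as [|a L IH]; simpl; auto. rewrite IH, (parity_map_xorb (P1 a) (P2 a)).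
  destruct (parity (map (P1 a) L)), (parity (map (P2 a) L)), (pair_parity P1 L),
    (pair_parity P2 L); reflexivity.
Qed.

Lemma pair_parity_map (h : A -> A) P L :
  pair_parity P (map h L) = pair_parity (fun x y => P (h x) (h y)) L.
Proof. induction L; simpl; auto. rewrite IHL, map_map. reflexivity. Qed.

Lemma pair_parity_ext_in P P' L :
  (forall x y, In x L -> In y L -> P x y = P' x y) -> pair_parity P L = pair_parity P' L.
Proof.
  induction L as [|a L IH]; simpl; intros H; auto.
  rewrite IH by (intros; apply H; right; auto).
  f_equal. f_equal. apply map_ext_in. intros; apply H; auto.
Qed.

Lemma pair_parity_false P L :
  (forall x y, In x L -> In y L -> P x y = false) -> pair_parity P L = false.
Proof.
  intros H. rewrite (pair_parity_ext_in P (fun _ _ => false)) by auto.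
  clear H. induction L as [|a L IH]; simpl; auto.
  rewrite IH, parity_map_false; auto.
Qed.

End PairParity.

Section Types.
Variables (A T : Type) (eqT : forall x y : T, {x = y} + {x <> y}) (t : A -> T).
Variable P : A -> A -> bool.
Hypothesis P_sym : forall x y, P x y = P y x.
Hypothesis P_type : forall x y x' y', x <> y -> x' <> y' ->
  t x = t x' -> t y = t y' -> P x y = P x' y'.

Notation count L tau := (count_occ eqT (map t L) tau).

Lemma perm_cons_of_type L a' : In (t a') (map t L) ->
  exists a L1, t a = t a' /\ Permutation L (a :: L1).
Proof.
  intros Hin. apply in_map_iff in Hin as [a [Ha Hin]].
  apply in_split in Hin as [l1 [l2 ->]].
  exists a, (l1 ++ l2). split; auto. apply Permutation_sym, Permutation_middle.
Qed.

Lemma parity_types a a' L L' :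
  Permutation (map t L) (map t L') -> t a = t a' ->
  ~ In a L -> ~ In a' L' -> parity (map (P a) L) = parity (map (P a') L').
Proof.
  revert L'; induction L as [|z L IH]; intros L' Hp Ha Hn Hn'.
  - apply Permutation_nil in Hp. destruct L'; [reflexivity | discriminate].
  - assert (Hz : In (t z) (map t L')) by (eapply Permutation_in; [exact Hp | left; reflexivity]).
    destruct (perm_cons_of_type L' z Hz) as [z' [L1 [Hz' PL']]].
    rewrite (parity_perm _ _ (Permutation_map (P a') PL')). simpl.
    rewrite (P_type a z a' z'); auto.
    2: { intros ->. apply Hn. left. reflexivity. }
    2: { intros ->. apply Hn', (Permutation_in _ (Permutation_sym PL')). left. reflexivity. }
    f_equal. apply IH; auto.
    + apply (Permutation_map t) in PL'. simpl in Hp, PL'. rewrite Hz' in PL'.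
      apply Permutation_cons_inv with (a := t z). eapply perm_trans; [exact Hp | exact PL'].
    + intros Hin; apply Hn; right; auto.
    + intros Hin; apply Hn', (Permutation_in _ (Permutation_sym PL')). right; auto.
Qed.

Lemma pair_parity_types L L' : NoDup L -> NoDup L' ->
  Permutation (map t L) (map t L') -> pair_parity P L = pair_parity P L'.
Proof.
  revert L'; induction L as [|a L IH]; intros L' N N' Hp.
  - apply Permutation_nil in Hp. destruct L'; [reflexivity | discriminate].
  - assert (Ha : In (t a) (map t L')) by (eapply Permutation_in; [exact Hp | left; reflexivity]).
    destruct (perm_cons_of_type L' a Ha) as [a' [L1 [Ha' PL']]].
    rewrite (pair_parity_perm P _ _ P_sym PL').
    apply (Permutation_NoDup PL') in N'.
    inversion N; inversion N'; subst.
    assert (Hp1 : Permutation (map t L) (map t L1)).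
    { apply (Permutation_map t) in PL'. simpl in Hp, PL'. rewrite Ha' in PL'.
      apply Permutation_cons_inv with (a := t a). eapply perm_trans; [exact Hp | exact PL']. }
    simpl. f_equal; [apply parity_types | apply IH]; auto.
Qed.

Lemma perm_app_of_count n L tau : n <= count L tau ->
  exists K L0, length K = n /\ (forall a, In a K -> t a = tau) /\ Permutation L (K ++ L0).
Proof.
  revert L; induction n as [|n IH]; intros L Hn.
  - exists [], L. repeat split; auto. intros a [].
  - assert (Hin : In tau (map t L)) by (apply (count_occ_In eqT); lia).
    apply in_map_iff in Hin as [a [Ha Hin]].
    apply in_split in Hin as [l1 [l2 ->]].
    assert (Hm : Permutation (l1 ++ a :: l2) (a :: l1 ++ l2))
      by apply Permutation_sym, Permutation_middle.
    rewrite (proj1 (Permutation_count_occ eqT _ _) (Permutation_map t Hm)) in Hn. simpl in Hn.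
    destruct (eqT (t a) tau); [|congruence].
    destruct (IH (l1 ++ l2)) as [K [L0 [HK [Ht Hp]]]]; [lia|].
    exists (a :: K), L0. repeat split.
    + simpl. congruence.
    + intros b [<-|Hb]; auto.
    + eapply perm_trans; [exact Hm | apply perm_skip, Hp].
Qed.

Lemma pair_parity_remove4 a b c d L0 : NoDup (a :: b :: c :: d :: L0) ->
  t a = t b -> t a = t c -> t a = t d ->
  pair_parity P (a :: b :: c :: d :: L0) = pair_parity P L0.
Proof.
  intros N Hb Hc Hd.
  inversion N as [|? ? Na N1]; inversion N1 as [|? ? Nb N2];
    inversion N2 as [|? ? Nc N3]; inversion N3 as [|? ? Nd N4]; subst.
  simpl in Na, Nb, Nc.
  assert (R : forall x y x' y', x <> y -> x' <> y' -> t x = t x' -> t y = t y' ->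
            P x y = P x' y') by exact P_type.
  assert (Row : forall u, In u [b; c; d] -> map (P u) L0 = map (P a) L0).
  { intros u Hu. apply map_ext_in. intros z Hz.
    destruct Hu as [<-|[<-|[<-|[]]]]; apply R; try congruence; intros ->; tauto. }
  assert (Pab : forall u v, In (u, v) [(a, c); (a, d); (b, c); (b, d); (c, d)] -> P u v = P a b).
  { intros u v Huv.
    destruct Huv as [E|[E|[E|[E|[E|[]]]]]]; injection E as <- <-;
      apply R; try congruence; intros ->; tauto. }
  simpl. rewrite (Row b), (Row c), (Row d) by (simpl; auto).
  rewrite (Pab a c), (Pab a d), (Pab b c), (Pab b d), (Pab c d) by (simpl; auto 6).
  destruct (P a b), (parity (map (P a) L0)), (pair_parity P L0); reflexivity.
Qed.

Lemma pair_parity_drop4 L tau : NoDup L -> 4 <= count L tau ->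
  exists L0, NoDup L0 /\ length L0 < length L /\ pair_parity P L = pair_parity P L0 /\
    forall tau', count L0 tau' mod 4 = count L tau' mod 4.
Proof.
  intros N H4.
  destruct (perm_app_of_count 4 L tau H4) as [[|a [|b [|c [|d [|? ?]]]]] [L0 [HK [Ht Hp]]]];
    try discriminate.
  assert (N' : NoDup (a :: b :: c :: d :: L0)) by exact (Permutation_NoDup Hp N).
  exists L0. repeat split.
  - inversion N' as [|? ? _ N1]; inversion N1 as [|? ? _ N2];
      inversion N2 as [|? ? _ N3]; inversion N3; auto.
  - apply Permutation_length in Hp. simpl in Hp. lia.
  - rewrite (pair_parity_perm P _ _ P_sym Hp).
    apply pair_parity_remove4; auto; rewrite !Ht; simpl; auto 6.
  - intros tau'. rewrite (proj1 (Permutation_count_occ eqT _ _) (Permutation_map t Hp)).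
    cbn [app map count_occ]. rewrite !(Ht a), !(Ht b), !(Ht c), !(Ht d) by (simpl; auto 6).
    destruct (eqT tau tau').
    + replace (S (S (S (S (count L0 tau'))))) with (count L0 tau' + 1 * 4) by lia.
      now rewrite Nat.Div0.mod_add.
    + reflexivity.
Qed.

(* Mod 4 suffices: the pairs inside a type of size [n] all have the same value, and the parity
   of their number [n (n - 1) / 2] only depends on [n mod 4]. *)
Lemma pair_parity_count_mod4 L L' : NoDup L -> NoDup L' ->
  (forall tau, count L tau mod 4 = count L' tau mod 4) -> pair_parity P L = pair_parity P L'.
Proof.
  remember (length L + length L') as n eqn:En.
  revert L L' En; induction n as [n IH] using lt_wf_ind; intros L L' En N N' Hc.
  destruct (classic (exists tau, 4 <= count L tau)) as [[tau H4]|H4].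
  { destruct (pair_parity_drop4 L tau N H4) as [L0 [N0 [Hl [-> Hc0]]]].
    apply (IH (length L0 + length L')); auto; [lia|]. intros tau'. rewrite Hc0. auto. }
  destruct (classic (exists tau, 4 <= count L' tau)) as [[tau H4']|H4'].
  { destruct (pair_parity_drop4 L' tau N' H4') as [L0 [N0 [Hl [-> Hc0]]]].
    apply (IH (length L + length L0)); auto; [lia|]. intros tau'. rewrite Hc0. auto. }
  apply pair_parity_types; auto. apply (Permutation_count_occ eqT). intros tau.
  specialize (Hc tau).
  rewrite !Nat.mod_small in Hc; auto;
    apply Nat.nle_gt; intros H; [apply H4' | apply H4]; eauto.
Qed.

End Types.

Definition count_in {A} (P : A -> Prop) (S : list A) : nat :=
  length (filter (fun x => if excluded_middle_informative (P x) then true else false) S).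

Section CountIn.
Context {A : Type}.
Implicit Types (P Q : A -> Prop) (S : list A).

Lemma count_in_ext P Q S : (forall x, In x S -> (P x <-> Q x)) -> count_in P S = count_in Q S.
Proof.
  intros H. unfold count_in. f_equal. apply filter_ext_in. intros x Hx.
  destruct (excluded_middle_informative (P x)), (excluded_middle_informative (Q x));
    firstorder.
Qed.

Lemma count_in_or P Q S : (forall x, In x S -> P x -> ~ Q x) ->
  count_in (fun x => P x \/ Q x) S = count_in P S + count_in Q S.
Proof.
  unfold count_in. induction S as [|a S IH]; intros H; auto.
  simpl filter.
  destruct (excluded_middle_informative (P a \/ Q a)), (excluded_middle_informative (P a)),
    (excluded_middle_informative (Q a)); simpl; rewrite IH by (intros; apply H; simpl; auto);
    try lia; exfalso; firstorder.
Qed.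

Lemma count_in_none P S : (forall x, In x S -> ~ P x) -> count_in P S = 0.
Proof.
  intros H. rewrite (count_in_ext P (fun _ => False)) by firstorder.
  unfold count_in. clear H. induction S as [|a S IH]; simpl; auto.
  destruct (excluded_middle_informative False) as [[]|_]. exact IH.
Qed.

Lemma count_in_all P S : (forall x, In x S -> P x) -> count_in P S = length S.
Proof.
  unfold count_in. induction S as [|a S IH]; simpl; intros H; auto.
  destruct (excluded_middle_informative (P a)) as [_|n]; [simpl; rewrite IH; auto|].
  exfalso. apply n, H. left. reflexivity.
Qed.

Lemma count_in_eq (p : A) S : NoDup S -> In p S -> count_in (fun x => x = p) S = 1.
Proof.
  unfold count_in. induction S as [|a S IH]; simpl; intros N Hp; [tauto|].
  inversion N; subst.
  destruct (excluded_middle_informative (a = p)) as [<-|n]; simpl.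
  - f_equal. apply count_in_none. intros x Hx ->. auto.
  - apply IH; auto. destruct Hp; congruence.
Qed.

Lemma count_in_app P S S' : count_in P (S ++ S') = count_in P S + count_in P S'.
Proof. unfold count_in. now rewrite filter_app, length_app. Qed.

Lemma count_in_map {B} (P : B -> Prop) (h : A -> B) S :
  count_in P (map h S) = count_in (fun x => P (h x)) S.
Proof.
  unfold count_in. induction S as [|a S IH]; simpl; auto.
  destruct (excluded_middle_informative (P (h a))); simpl; auto.
Qed.

Lemma count_occ_map_count_in {T} (eqT : forall u v : T, {u = v} + {u <> v}) (t : A -> T) S tau :
  count_occ eqT (map t S) tau = count_in (fun x => t x = tau) S.
Proof.
  unfold count_in. induction S as [|a S IH]; simpl; auto.
  destruct (eqT (t a) tau), (excluded_middle_informative (t a = tau)); simpl; congruence.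
Qed.

End CountIn.

(** * Points, cut sets and gaps *)

Open Scope R_scope.

Lemma xval_inj (x y : X) : xval x = xval y -> x = y.
Proof.
  destruct x as [x px], y as [y py]; simpl; intros ->. f_equal; apply proof_irrelevance.
Qed.

Definition X_eq_dec (x y : X) : {x = y} + {x <> y}.
Proof.
  destruct (Req_EM_T (xval x) (xval y)) as [h|h];
    [left; now apply xval_inj | right; intros ->; now apply h].
Defined.

Lemma xval_range (x : X) : 0 <= xval x < 1.
Proof. destruct x; auto. Qed.

Lemma xval_neq (x y : X) : x <> y -> xval x <> xval y.
Proof. intros H h. apply H, xval_inj, h. Qed.

Lemma is_inverse_injective f g : is_inverse f g -> Injective f.
Proof. intros [H _] x y E. rewrite <- (H x), <- (H y), E. reflexivity. Qed.

Lemma is_inverse_sym f g : is_inverse f g -> is_inverse g f.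
Proof. intros [H1 H2]. split; auto. Qed.

Lemma is_inverse_comp f fi g gi : is_inverse f fi -> is_inverse g gi ->
  is_inverse (comp f g) (comp gi fi).
Proof.
  intros [F1 F2] [G1 G2]. unfold comp. split; intros x; [rewrite F1 | rewrite G2]; auto.
Qed.

Definition pt0 : X := exist _ 0 (conj (Rle_refl 0) Rlt_0_1).

(* Outside [0, 1[ the value is a junk point. *)
Definition clampX (r : R) : X :=
  match Rle_dec 0 r with
  | left h1 =>
      match Rlt_dec r 1 with left h2 => exist _ r (conj h1 h2) | right _ => pt0 end
  | right _ => pt0
  end.

Lemma clampX_val r : 0 <= r < 1 -> xval (clampX r) = r.
Proof.
  intros [h1 h2]. unfold clampX.
  destruct (Rle_dec 0 r); [|lra]. destruct (Rlt_dec r 1); [reflexivity | lra].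
Qed.

Lemma clampX_xval x : clampX (xval x) = x.
Proof. apply xval_inj, clampX_val, xval_range. Qed.

(* The largest point of [E] below [x]; all the lemmas assume [In pt0 E], which makes it
   a point of [E]. *)
Fixpoint floor_in (E : list X) (x : X) : X :=
  match E with
  | [] => pt0
  | a :: E' =>
      if Rle_dec (xval a) (xval x)
      then (if Rlt_dec (xval (floor_in E' x)) (xval a) then a else floor_in E' x)
      else floor_in E' x
  end.

Section Floor.
Variable E : list X.
Hypothesis E0 : In pt0 E.

Lemma floor_in_spec x : In (floor_in E x) E /\ xval (floor_in E x) <= xval x /\
  (forall a, In a E -> xval a <= xval x -> xval a <= xval (floor_in E x)).
Proof.
  assert (H : (floor_in E x = pt0 \/ In (floor_in E x) E) /\ xval (floor_in E x) <= xval x /\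
    (forall a, In a E -> xval a <= xval x -> xval a <= xval (floor_in E x))).
  { clear E0. induction E as [|b E' [H1 [H2 H3]]]; simpl.
    - pose proof (xval_range x). split; [left; auto | split; [simpl; lra | intros a []]].
    - destruct (Rle_dec (xval b) (xval x));
        [destruct (Rlt_dec (xval (floor_in E' x)) (xval b))|].
      all: split; [tauto | split; [auto; lra|]].
      all: intros a [->|Ha] Hax; [lra | specialize (H3 a Ha Hax); lra]. }
  destruct H as [[->|H1] H2]; auto.
Qed.

Lemma floor_in_In x : In (floor_in E x) E.
Proof. apply floor_in_spec. Qed.

Lemma floor_in_le x : xval (floor_in E x) <= xval x.
Proof. apply floor_in_spec. Qed.

Lemma floor_in_max x a : In a E -> xval a <= xval x -> xval a <= xval (floor_in E x).
Proof. apply floor_in_spec. Qed.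

Lemma floor_in_char x p : In p E -> xval p <= xval x ->
  (forall a, In a E -> xval a <= xval x -> xval a <= xval p) -> floor_in E x = p.
Proof.
  intros Hp Hpx Hm. apply xval_inj, Rle_antisym.
  - apply Hm; [apply floor_in_In | apply floor_in_le].
  - apply floor_in_max; auto.
Qed.

Lemma floor_in_mono x y : xval x <= xval y -> xval (floor_in E x) <= xval (floor_in E y).
Proof. intros Hxy. apply floor_in_max; [apply floor_in_In | pose proof (floor_in_le x); lra]. Qed.

Lemma floor_in_eq_of_no_cut x y : xval x <= xval y ->
  (forall e, In e E -> ~ (xval x <= xval e <= xval y)) -> floor_in E x = floor_in E y.
Proof.
  intros Hxy Hn. apply xval_inj, Rle_antisym; [apply floor_in_mono; auto|].
  pose proof (floor_in_In y) as Hy. pose proof (floor_in_le y).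
  apply floor_in_max; auto.
  destruct (Rlt_dec (xval (floor_in E y)) (xval x)); [lra|].
  exfalso. apply (Hn _ Hy). lra.
Qed.

End Floor.

Lemma floor_in_ext E E' x : In pt0 E -> (forall a, In a E <-> In a E') ->
  floor_in E' x = floor_in E x.
Proof.
  intros E0 Hq. assert (E0' : In pt0 E') by (apply Hq; auto).
  apply floor_in_char; auto.
  - apply Hq, floor_in_In; auto.
  - apply floor_in_le; auto.
  - intros a Ha Hax. apply floor_in_max; auto. apply Hq; auto.
Qed.

Definition in_gap (E : list X) (e x : X) : Prop := ~ In x E /\ floor_in E x = e.

Lemma in_gap_convex E e x y z : In pt0 E -> in_gap E e x -> in_gap E e y ->
  xval x <= xval z <= xval y -> in_gap E e z.
Proof.
  intros E0 [Hx Hxe] [Hy Hye] [h1 h2]. split.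
  - intros Hz. pose proof (floor_in_max E E0 y z Hz h2).
    pose proof (floor_in_le E E0 x). rewrite Hxe in *; rewrite Hye in *.
    assert (xval z = xval x) by lra. apply xval_inj in H1. subst. auto.
  - apply xval_inj. pose proof (floor_in_mono E E0 x z h1). pose proof (floor_in_mono E E0 z y h2).
    rewrite Hxe, Hye in *. lra.
Qed.

Fixpoint next_cut (E : list X) (r : R) : R :=
  match E with
  | [] => 1
  | a :: E' => if Rlt_dec r (xval a) then Rmin (xval a) (next_cut E' r) else next_cut E' r
  end.

Lemma next_cut_spec E r : r < 1 ->
  r < next_cut E r <= 1 /\ forall a, In a E -> r < xval a -> next_cut E r <= xval a.
Proof.
  intros Hr. induction E as [|b E [[h1 h2] h3]]; simpl.
  - split; [lra | tauto].
  - pose proof (xval_range b). pose proof (Rmin_l (xval b) (next_cut E r)).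
    pose proof (Rmin_r (xval b) (next_cut E r)).
    destruct (Rlt_dec r (xval b)).
    + split; [unfold Rmin; destruct (Rle_dec (xval b) (next_cut E r)); lra|].
      intros a [->|Ha] Hra; [lra|]. specialize (h3 a Ha Hra). lra.
    + split; [lra|]. intros a [->|Ha] Hra; [lra | auto].
Qed.

Lemma in_gap_of_range E e r : In pt0 E -> In e E -> xval e < r < next_cut E (xval e) ->
  in_gap E e (clampX r) /\ xval (clampX r) = r.
Proof.
  intros E0 He [h1 h2].
  pose proof (xval_range e). destruct (next_cut_spec E (xval e)) as [[n1 n2] n3]; [lra|].
  assert (Hv : xval (clampX r) = r) by (apply clampX_val; lra).
  repeat split; auto.
  - intros Hin. specialize (n3 _ Hin). lra.
  - apply floor_in_char; auto; [lra|].
    intros a Ha Har. destruct (Rlt_dec (xval e) (xval a)) as [l|l]; [|lra].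
    specialize (n3 a Ha l). lra.
Qed.

Lemma gap_nonempty E e : In pt0 E -> In e E -> exists z, in_gap E e z.
Proof.
  intros E0 He. pose proof (xval_range e).
  destruct (next_cut_spec E (xval e)) as [[n1 n2] _]; [lra|].
  destruct (in_gap_of_range E e ((xval e + next_cut E (xval e)) / 2) E0 He) as [G _]; [lra|].
  eauto.
Qed.

(** * Samples adapted to a cut set *)

(* The residue 3 is the solution of [r + 1 + r = r (mod 4)]: adding a cut point [p] splits
   a gap into two gaps and [p] (see [adapted_refine1]). *)
Definition adapted (E S : list X) : Prop :=
  NoDup S /\ incl E S /\ forall e, In e E -> (count_in (in_gap E e) S mod 4 = 3)%nat.

Lemma adapted_ext E E' S : In pt0 E -> (forall a, In a E <-> In a E') ->
  adapted E S -> adapted E' S.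
Proof.
  intros E0 Hq [N [I C]]. split; [auto | split].
  - intros a Ha. apply I, Hq, Ha.
  - intros e He. erewrite count_in_ext; [apply (C e (proj2 (Hq e) He)) |].
    intros x _. unfold in_gap.
    rewrite (floor_in_ext E E' x E0 Hq), (Hq x). tauto.
Qed.

Section Refine.
Variables (E : list X) (p : X).
Hypotheses (E0 : In pt0 E) (Hp : ~ In p E).

Lemma floor_in_cons_lt x : xval x < xval p -> floor_in (p :: E) x = floor_in E x.
Proof. intros H. simpl. destruct (Rle_dec (xval p) (xval x)); [lra | reflexivity]. Qed.

Lemma floor_in_off_lt : xval (floor_in E p) < xval p.
Proof.
  destruct (floor_in_le E E0 p) as [H|H]; auto.
  apply xval_inj in H. exfalso. apply Hp. rewrite <- H. apply floor_in_In, E0.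
Qed.

Lemma floor_in_cons_ge x : xval p <= xval x -> floor_in E x = floor_in E p ->
  floor_in (p :: E) x = p.
Proof.
  intros H Hx. pose proof floor_in_off_lt. simpl.
  destruct (Rle_dec (xval p) (xval x)); [|lra].
  destruct (Rlt_dec (xval (floor_in E x)) (xval p)); [reflexivity | rewrite Hx in *; lra].
Qed.

Lemma floor_in_eq_floor x : xval p <= xval x -> xval (floor_in E x) <= xval p ->
  floor_in E x = floor_in E p.
Proof.
  intros H1 H2. apply xval_inj, Rle_antisym.
  - apply floor_in_max; auto. apply floor_in_In, E0.
  - apply floor_in_mono; auto.
Qed.

Lemma in_gap_cons_other e x : In e E -> e <> floor_in E p ->
  (in_gap (p :: E) e x <-> in_gap E e x).
Proof.
  intros He Hne. unfold in_gap. cbn [In].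
  assert (Hep : e <> p) by (intros ->; auto).
  destruct (Rlt_dec (xval x) (xval p)) as [l|l].
  - rewrite floor_in_cons_lt by auto. split; [tauto|].
    intros [Hx Hxe]. split; auto. intros [->|]; [lra | auto].
  - split.
    + intros [Hx Hxe]. split; [tauto|]. simpl in Hxe.
      destruct (Rle_dec (xval p) (xval x)); [|lra].
      destruct (Rlt_dec (xval (floor_in E x)) (xval p)); congruence.
    + intros [Hx Hxe]. split.
      * intros [<-|]; [apply Hne; congruence | auto].
      * rewrite <- Hxe. simpl. destruct (Rle_dec (xval p) (xval x)); [|reflexivity].
        destruct (Rlt_dec (xval (floor_in E x)) (xval p)); [|reflexivity].
        exfalso. apply Hne. rewrite <- Hxe. apply floor_in_eq_floor; lra.
Qed.

Lemma in_gap_split x : in_gap E (floor_in E p) x <->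
  (in_gap (p :: E) (floor_in E p) x \/ x = p) \/ in_gap (p :: E) p x.
Proof.
  pose proof floor_in_off_lt as Hlt.
  assert (Hfp : floor_in E p <> p) by (intros h; rewrite h in Hlt; lra).
  unfold in_gap. cbn [In]. split.
  - intros [Hx Hxe]. destruct (X_eq_dec x p) as [->|Hxp]; [tauto|].
    destruct (Rlt_dec (xval x) (xval p)) as [l|l].
    + left; left. rewrite floor_in_cons_lt by auto. intuition.
    + right. split; [intuition|]. apply floor_in_cons_ge; auto; lra.
  - intros [[[Hx Hxe]| ->]|[Hx Hxe]]; split; try tauto.
    + destruct (Rlt_dec (xval x) (xval p)) as [l|l].
      * rewrite floor_in_cons_lt in Hxe; auto.
      * simpl in Hxe. destruct (Rle_dec (xval p) (xval x)); [|lra].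
        destruct (Rlt_dec (xval (floor_in E x)) (xval p)); [congruence | auto].
    + simpl in Hxe. destruct (Rle_dec (xval p) (xval x)) as [l|l].
      * destruct (Rlt_dec (xval (floor_in E x)) (xval p)).
        -- apply floor_in_eq_floor; lra.
        -- exfalso. apply Hp. rewrite <- Hxe. apply floor_in_In, E0.
      * exfalso. apply Hp. rewrite <- Hxe. apply floor_in_In, E0.
Qed.

Lemma adapted_refine1 S : adapted (p :: E) S -> adapted E S.
Proof.
  intros [N [I C]].
  split; [auto | split; [intros a Ha; apply I; right; auto|]].
  intros e He.
  destruct (X_eq_dec e (floor_in E p)) as [->|Hne].
  - set (e0 := floor_in E p) in *.
    assert (D1 : forall x, In x S -> in_gap (p :: E) e0 x -> x <> p)
      by (intros x _ [Hx _] ->; apply Hx; left; auto).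
    assert (D2 : forall x, In x S -> in_gap (p :: E) e0 x \/ x = p -> ~ in_gap (p :: E) p x).
    { pose proof floor_in_off_lt as Hlt. intros x _ [[_ Hxe]| ->] [Hx' Hxe'].
      - rewrite Hxe in Hxe'. fold e0 in Hlt. rewrite Hxe' in Hlt. lra.
      - apply Hx'. left; auto. }
    rewrite (count_in_ext _ _ _ (fun x _ => in_gap_split x)).
    rewrite (count_in_or (fun x => in_gap (p :: E) e0 x \/ x = p)) by exact D2.
    rewrite count_in_or by exact D1.
    rewrite count_in_eq by (auto; apply I; left; auto).
    rewrite Nat.Div0.add_mod, (Nat.Div0.add_mod _ 1), (C e0), (C p); simpl; auto.
  - erewrite count_in_ext; [apply (C e (or_intror He)) |].
    intros x _. symmetry. apply in_gap_cons_other; auto.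
Qed.

End Refine.

Lemma adapted_refine_app D E S : In pt0 E -> adapted (D ++ E) S -> adapted E S.
Proof.
  induction D as [|a D IH]; simpl; intros E0 G; auto.
  apply IH; auto.
  destruct (in_dec X_eq_dec a (D ++ E)) as [Ha|Ha].
  - apply (adapted_ext (a :: D ++ E)); auto.
    + right; apply in_or_app; auto.
    + intros b; simpl; split; [intros [->|?]|]; auto.
  - apply (adapted_refine1 _ a); auto. apply in_or_app; auto.
Qed.

Lemma adapted_refine E E2 S : In pt0 E -> incl E E2 -> adapted E2 S -> adapted E S.
Proof.
  intros E0 Hi G. apply (adapted_refine_app E2); auto.
  apply (adapted_ext E2); auto.
  intros a; rewrite in_app_iff; split; [auto | intros [?|?]; auto].
Qed.

Definition gap_points (E : list X) (e : X) : list X :=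
  let d := next_cut E (xval e) - xval e in
  [clampX (xval e + d / 4); clampX (xval e + d / 2); clampX (xval e + 3 * d / 4)].

Lemma gap_points_spec E e : In pt0 E -> In e E ->
  NoDup (gap_points E e) /\ forall z, In z (gap_points E e) -> in_gap E e z.
Proof.
  intros E0 He. pose proof (xval_range e).
  destruct (next_cut_spec E (xval e)) as [[n1 n2] _]; [lra|].
  set (d := next_cut E (xval e) - xval e).
  destruct (in_gap_of_range E e (xval e + d / 4) E0 He) as [G1 V1]; [unfold d; lra|].
  destruct (in_gap_of_range E e (xval e + d / 2) E0 He) as [G2 V2]; [unfold d; lra|].
  destruct (in_gap_of_range E e (xval e + 3 * d / 4) E0 He) as [G3 V3]; [unfold d; lra|].
  unfold gap_points. fold d. split.
  - repeat constructor; simpl; [intros [h|[h|[]]] | intros [h|[]] | intros []];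
      apply (f_equal xval) in h; unfold d in *; lra.
  - intros z [<-|[<-|[<-|[]]]]; auto.
Qed.

Lemma in_gap_fun E e e' x : in_gap E e x -> in_gap E e' x -> e = e'.
Proof. intros [_ H] [_ H']. congruence. Qed.

Lemma count_in_gap_points E L e : In pt0 E -> NoDup L -> incl L E ->
  count_in (in_gap E e) (flat_map (gap_points E) L) = if in_dec X_eq_dec e L then 3%nat else 0%nat.
Proof.
  intros E0. induction L as [|a L IH]; intros N I; [reflexivity|].
  inversion N; subst. cbn [flat_map].
  rewrite count_in_app, IH by (auto; intros b Hb; apply I; right; auto).
  destruct (gap_points_spec E a E0 (I a (or_introl eq_refl))) as [_ Ha].
  destruct (X_eq_dec a e) as [->|ne].
  - rewrite count_in_all by auto.
    destruct (in_dec X_eq_dec e (e :: L)) as [_|n]; [|simpl in n; tauto].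
    destruct (in_dec X_eq_dec e L); [tauto|]. reflexivity.
  - rewrite count_in_none by (intros z Hz Hz'; apply ne, (in_gap_fun E a e z); auto).
    destruct (in_dec X_eq_dec e (a :: L)) as [[h|h]|h], (in_dec X_eq_dec e L);
      simpl in *; tauto || congruence.
Qed.

Lemma NoDup_gap_points E L : In pt0 E -> NoDup L -> incl L E -> NoDup (flat_map (gap_points E) L).
Proof.
  intros E0. induction L as [|a L IH]; intros N I; [constructor|]. cbn [flat_map].
  inversion N as [|? ? HaL NL]; subst.
  destruct (gap_points_spec E a E0 (I a (or_introl eq_refl))) as [Na Ha].
  apply NoDup_app; auto.
  - apply IH; auto. intros b Hb; apply I; right; auto.
  - intros z Hz Hz'. apply in_flat_map in Hz' as [b [Hb Hzb]].
    destruct (gap_points_spec E b E0 (I b (or_intror Hb))) as [_ Hb'].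
    apply HaL. rewrite (in_gap_fun E a b z); auto.
Qed.

Lemma adapted_exists E : In pt0 E -> exists S, adapted E S.
Proof.
  intros E0.
  set (E' := nodup X_eq_dec E).
  assert (Hq : forall a, In a E' <-> In a E) by (intros; apply nodup_In).
  assert (E0' : In pt0 E') by (apply Hq; auto).
  assert (N' : NoDup E') by apply NoDup_nodup.
  exists (E' ++ flat_map (gap_points E') E').
  apply (adapted_ext E'); auto.
  split; [|split].
  - apply NoDup_app; auto; [apply NoDup_gap_points; auto; intros a; auto|].
    intros z Hz Hz'. apply in_flat_map in Hz' as [b [Hb Hzb]].
    apply (proj2 (gap_points_spec E' b E0' Hb) z Hzb), Hz.
  - intros a Ha; apply in_or_app; auto.
  - intros e He. rewrite count_in_app, count_in_gap_points by (auto; intros a; auto).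
    rewrite count_in_none by (intros x Hx [Hx' _]; auto).
    destruct (in_dec X_eq_dec e E'); tauto || reflexivity.
Qed.

(** * Continuous injections on gaps *)

Definition cuts (f : Xmap) (E : list X) : Prop :=
  In pt0 E /\ forall x, ~ In x E -> cont_at f x.

Definition lift_to_R (f : Xmap) (r : R) : R := xval (f (clampX r)).

Lemma lift_to_R_cont f r : 0 <= r < 1 -> cont_at f (clampX r) -> continuity_pt (lift_to_R f) r.
Proof.
  intros Hr Hc eps Heps. destruct (Hc eps Heps) as [d [Hd Hdd]].
  exists (Rmin d (1 - r)). split; [apply Rmin_pos; lra|].
  intros r' [_ Hr']. simpl in *. unfold Rdist, lift_to_R in *.
  pose proof (Rmin_l d (1 - r)). pose proof (Rmin_r d (1 - r)).
  apply Hdd. rewrite (clampX_val r) by auto. unfold clampX.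
  destruct (Rle_dec 0 r'); [destruct (Rlt_dec r' 1)|]; simpl.
  - lra.
  - apply Rabs_def2 in Hr'. lra.
  - rewrite Rabs_left1 in * by lra. lra.
Qed.

Lemma cont_at_IVT f a c v : xval a <= xval c ->
  (forall z, xval a <= xval z <= xval c -> cont_at f z) ->
  (xval (f a) <= v <= xval (f c) \/ xval (f c) <= v <= xval (f a)) ->
  exists z, xval a <= xval z <= xval c /\ xval (f z) = v.
Proof.
  intros Hac Hc Hv. pose proof (xval_range a). pose proof (xval_range c).
  assert (Hcont : forall r, xval a <= r <= xval c -> continuity_pt (lift_to_R f) r).
  { intros r Hr. apply lift_to_R_cont; [lra|]. apply Hc. rewrite clampX_val; lra. }
  assert (Ha : lift_to_R f (xval a) = xval (f a)) by (unfold lift_to_R; now rewrite clampX_xval).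
  assert (Hc' : lift_to_R f (xval c) = xval (f c)) by (unfold lift_to_R; now rewrite clampX_xval).
  destruct Hac as [Hlt|Heq]; [|exists a; apply xval_inj in Heq; subst; split; lra].
  destruct Hv as [Hv|Hv].
  - destruct (f_interv_is_interv (lift_to_R f) _ _ v Hlt ltac:(lra) Hcont) as [r [Hr Hfr]].
    exists (clampX r). rewrite clampX_val by lra. auto.
  - destruct (f_interv_is_interv (fun r => - lift_to_R f r) _ _ (- v) Hlt ltac:(lra))
      as [r [Hr Hfr]]; [intros r Hr; apply continuity_pt_opp; auto|].
    exists (clampX r). rewrite clampX_val by lra. unfold lift_to_R in Hfr. split; [auto | lra].
Qed.

Lemma injective_xval_neq (f : Xmap) x y : Injective f -> x <> y -> xval (f x) <> xval (f y).
Proof. intros Hi Hxy h. apply Hxy, Hi, xval_inj, h. Qed.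

Definition lies_between (v a b : R) : Prop := a <= v <= b \/ b <= v <= a.

Section Gap.
Variables (f : Xmap) (E : list X).
Hypotheses (Hf : cuts f E) (f_inj : Injective f).

Lemma cont_on_gap e a c z : in_gap E e a -> in_gap E e c -> xval a <= xval z <= xval c ->
  cont_at f z.
Proof. intros Ga Gc Hz. apply (proj2 Hf), (in_gap_convex E e a c z (proj1 Hf) Ga Gc Hz). Qed.

Lemma gap_IVT e a c v : in_gap E e a -> in_gap E e c -> xval a <= xval c ->
  lies_between v (xval (f a)) (xval (f c)) ->
  exists z, xval a <= xval z <= xval c /\ xval (f z) = v.
Proof.
  intros Ga Gc Hac. apply cont_at_IVT; auto. intros z Hz. apply (cont_on_gap e a c); auto.
Qed.

Lemma gap_value_once e a b c v : in_gap E e a -> in_gap E e b -> in_gap E e c ->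
  xval a <= xval b <= xval c -> lies_between v (xval (f a)) (xval (f b)) ->
  lies_between v (xval (f b)) (xval (f c)) -> v = xval (f b).
Proof.
  intros Ga Gb Gc [h1 h2] Hab Hbc.
  destruct (gap_IVT e a b v Ga Gb h1 Hab) as [p [Hp Hfp]].
  destruct (gap_IVT e b c v Gb Gc h2 Hbc) as [q [Hq Hfq]].
  assert (p = q) by (apply f_inj, xval_inj; congruence). subst q.
  assert (xval p = xval b) as Hpb by lra. apply xval_inj in Hpb. subst. auto.
Qed.

Lemma gap_monotone3 e a b c : in_gap E e a -> in_gap E e b -> in_gap E e c ->
  xval a < xval b < xval c ->
  xval (f a) < xval (f b) < xval (f c) \/ xval (f c) < xval (f b) < xval (f a).
Proof.
  intros Ga Gb Gc [h1 h2].
  assert (nab : a <> b) by (intros ->; lra). assert (nbc : b <> c) by (intros ->; lra).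
  assert (nac : a <> c) by (intros ->; lra).
  pose proof (injective_xval_neq f a b f_inj nab). pose proof (injective_xval_neq f b c f_inj nbc).
  pose proof (injective_xval_neq f a c f_inj nac).
  set (fa := xval (f a)) in *. set (fb := xval (f b)) in *. set (fc := xval (f c)) in *.
  destruct (Rlt_dec fa fb), (Rlt_dec fb fc); try (left; lra); try (right; lra); exfalso.
  - set (v := (Rmax fa fc + fb) / 2).
    assert (Rmax fa fc < fb) by (unfold Rmax; destruct (Rle_dec fa fc); lra).
    pose proof (Rmax_l fa fc). pose proof (Rmax_r fa fc).
    assert (v = fb) by (apply (gap_value_once e a b c); unfold v, fa, fb, fc in *; auto;
      [lra | left; lra | right; lra]).
    unfold v in *. lra.
  - set (v := (Rmin fa fc + fb) / 2).
    assert (fb < Rmin fa fc) by (unfold Rmin; destruct (Rle_dec fa fc); lra).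
    pose proof (Rmin_l fa fc). pose proof (Rmin_r fa fc).
    assert (v = fb) by (apply (gap_value_once e a b c); unfold v, fa, fb, fc in *; auto;
      [lra | right; lra | left; lra]).
    unfold v in *. lra.
Qed.

Lemma gap_nested e a b a' b' : in_gap E e a -> in_gap E e b -> in_gap E e a' -> in_gap E e b' ->
  xval a <= xval a' -> xval a' < xval b' -> xval b' <= xval b ->
  (xval (f a) < xval (f b) <-> xval (f a') < xval (f b')).
Proof.
  intros Ga Gb Ga' Gb' h1 h2 h3.
  assert (S1 : xval (f a) < xval (f b) <-> xval (f a) < xval (f b')).
  { destruct h3 as [h3|h3]; [|apply xval_inj in h3; subst; tauto].
    destruct (gap_monotone3 e a b' b Ga Gb' Gb); [lra | split; intros; lra | split; intros; lra]. }
  rewrite S1.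
  destruct h1 as [h1|h1]; [|apply xval_inj in h1; subst; tauto].
  destruct (gap_monotone3 e a a' b' Ga Ga' Gb'); [lra | split; intros; lra | split; intros; lra].
Qed.

Lemma gap_monotone e x y x' y' : in_gap E e x -> in_gap E e y -> in_gap E e x' -> in_gap E e y' ->
  xval x < xval y -> xval x' < xval y' ->
  (xval (f x) < xval (f y) <-> xval (f x') < xval (f y')).
Proof.
  intros Gx Gy Gx' Gy' h1 h2.
  set (m := if Rle_dec (xval x) (xval x') then x else x').
  set (M := if Rle_dec (xval y) (xval y') then y' else y).
  assert (Gm : in_gap E e m) by (unfold m; destruct (Rle_dec (xval x) (xval x')); auto).
  assert (GM : in_gap E e M) by (unfold M; destruct (Rle_dec (xval y) (xval y')); auto).
  assert (xval m <= xval x /\ xval m <= xval x')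
    by (unfold m; destruct (Rle_dec (xval x) (xval x')); lra).
  assert (xval y <= xval M /\ xval y' <= xval M)
    by (unfold M; destruct (Rle_dec (xval y) (xval y')); lra).
  rewrite <- (gap_nested e m M x y), <- (gap_nested e m M x' y'); tauto || lra.
Qed.

End Gap.

(** * Inversions and the signature *)

Definition Rltb (a b : R) : bool := if Rlt_dec a b then true else false.

Definition inversion (f : Xmap) (x y : X) : bool :=
  xorb (Rltb (xval x) (xval y)) (Rltb (xval (f x)) (xval (f y))).

Lemma Rltb_swap a b : a <> b -> Rltb b a = negb (Rltb a b).
Proof. intros H. unfold Rltb. destruct (Rlt_dec b a), (Rlt_dec a b); simpl; auto; lra. Qed.

Lemma inversion_sym f x y : Injective f -> inversion f x y = inversion f y x.
Proof.
  intros Hi. destruct (X_eq_dec x y) as [->|n]; auto.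
  unfold inversion. rewrite (Rltb_swap (xval x) (xval y)) by (apply xval_neq; auto).
  rewrite (Rltb_swap (xval (f x)) (xval (f y))) by (apply injective_xval_neq; auto).
  destruct (Rltb (xval x) (xval y)), (Rltb (xval (f x)) (xval (f y))); reflexivity.
Qed.

Lemma inversion_lt f x y : xval x < xval y ->
  inversion f x y = negb (Rltb (xval (f x)) (xval (f y))).
Proof.
  intros H. unfold inversion, Rltb at 1. destruct (Rlt_dec (xval x) (xval y)); [reflexivity | lra].
Qed.

Lemma inversion_comp g h x y :
  inversion (comp g h) x y = xorb (inversion h x y) (inversion g (h x) (h y)).
Proof.
  unfold inversion, comp.
  destruct (Rltb (xval x) (xval y)), (Rltb (xval (h x)) (xval (h y))),
    (Rltb (xval (g (h x))) (xval (g (h y)))); reflexivity.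
Qed.

Section Inversions.
Variables (f : Xmap) (E : list X).
Hypotheses (Hf : cuts f E) (f_inj : Injective f).

Lemma inversion_same_gap e x y x' y' :
  in_gap E e x -> in_gap E e y -> in_gap E e x' -> in_gap E e y' ->
  x <> y -> x' <> y' -> inversion f x y = inversion f x' y'.
Proof.
  intros Gx Gy Gx' Gy' n n'.
  assert (K : forall a b a' b', in_gap E e a -> in_gap E e b -> in_gap E e a' -> in_gap E e b' ->
            xval a < xval b -> xval a' < xval b' -> inversion f a b = inversion f a' b').
  { intros a b a' b' Ga Gb Ga' Gb' hab hab'. rewrite !inversion_lt by auto. unfold Rltb.
    pose proof (gap_monotone f E Hf f_inj e a b a' b' Ga Gb Ga' Gb' hab hab').
    destruct (Rlt_dec (xval (f a)) (xval (f b))), (Rlt_dec (xval (f a')) (xval (f b'))); tauto. }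
  pose proof (xval_neq x y n). pose proof (xval_neq x' y' n').
  destruct (Rlt_dec (xval x) (xval y)), (Rlt_dec (xval x') (xval y')).
  - apply K; auto.
  - rewrite (inversion_sym f x' y') by auto. apply K; auto; lra.
  - rewrite (inversion_sym f x y) by auto. apply K; auto; lra.
  - rewrite (inversion_sym f x y), (inversion_sym f x' y') by auto. apply K; auto; lra.
Qed.

Lemma inversion_other_gap e x x' y : in_gap E e x -> in_gap E e x' -> ~ in_gap E e y ->
  inversion f x y = inversion f x' y.
Proof.
  intros Gx Gx' Gy.
  assert (K : forall a a', in_gap E e a -> in_gap E e a' -> xval a <= xval a' ->
            inversion f a y = inversion f a' y).
  { intros a a' Ga Ga' Hle.
    assert (ya : a <> y) by (intros ->; auto). assert (ya' : a' <> y) by (intros ->; auto).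
    assert (Ny : ~ (xval a <= xval y <= xval a'))
      by (intros Hb; apply Gy, (in_gap_convex E e a a' y (proj1 Hf) Ga Ga' Hb)).
    assert (Nfy : ~ lies_between (xval (f y)) (xval (f a)) (xval (f a'))).
    { intros Hb. destruct (gap_IVT f E Hf e a a' _ Ga Ga' Hle Hb) as [z [Hz Hfz]].
      assert (z = y) by (apply f_inj, xval_inj; auto). subst z. auto. }
    pose proof (xval_neq _ _ ya). pose proof (xval_neq _ _ ya').
    pose proof (injective_xval_neq f _ _ f_inj ya). pose proof (injective_xval_neq f _ _ f_inj ya').
    unfold lies_between, inversion, Rltb in *.
    destruct (Rlt_dec (xval a) (xval y)), (Rlt_dec (xval a') (xval y)),
      (Rlt_dec (xval (f a)) (xval (f y))), (Rlt_dec (xval (f a')) (xval (f y)));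
      try reflexivity; exfalso; try (apply Ny; lra); apply Nfy; lra. }
  destruct (Rle_dec (xval x) (xval x')); [apply K | symmetry; apply K]; auto; lra.
Qed.

Definition X_bool_eq_dec (a b : X * bool) : {a = b} + {a <> b}.
Proof. decide equality; [apply bool_dec | apply X_eq_dec]. Defined.

Definition cut_type (x : X) : X * bool :=
  if in_dec X_eq_dec x E then (x, false) else (floor_in E x, true).

Lemma cut_type_gap x x' : cut_type x = cut_type x' ->
  x = x' \/ (in_gap E (floor_in E x) x /\ in_gap E (floor_in E x) x').
Proof.
  unfold cut_type, in_gap.
  destruct (in_dec X_eq_dec x E), (in_dec X_eq_dec x' E); intros H; inversion H; auto.
Qed.

Lemma inversion_cut_type x y x' y' : x <> y -> x' <> y' ->
  cut_type x = cut_type x' -> cut_type y = cut_type y' -> inversion f x y = inversion f x' y'.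
Proof.
  intros n n' Tx Ty.
  destruct (classic (in_gap E (floor_in E x) x /\ in_gap E (floor_in E x) y)) as [[Gx Gy]|Hn].
  - destruct (cut_type_gap x x' Tx) as [<-|[_ Gx']], (cut_type_gap y y' Ty) as [<-|[Gy2 Gy']].
    all: try reflexivity.
    all: apply (inversion_same_gap (floor_in E x)); auto.
    all: destruct Gy as [_ Ey]; rewrite Ey in Gy'; auto.
  - assert (S1 : inversion f x y = inversion f x' y).
    { destruct (cut_type_gap x x' Tx) as [<-|[Gx Gx']]; auto.
      apply (inversion_other_gap (floor_in E x)); auto. }
    rewrite S1, (inversion_sym f x' y), (inversion_sym f x' y') by auto.
    destruct (cut_type_gap y y' Ty) as [<-|[Gy Gy']]; auto.
    apply (inversion_other_gap (floor_in E y)); auto. intros [Hx' Ex'].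
    destruct (cut_type_gap x x' Tx) as [<-|[[Hx Ex] [Hx2 Ex2]]]; apply Hn; unfold in_gap in *;
      intuition congruence.
Qed.

Lemma count_cut_type S tau : adapted E S ->
  (count_occ X_bool_eq_dec (map cut_type S) tau mod 4 =
     if in_dec X_eq_dec (fst tau) E then (if snd tau then 3 else 1) else 0)%nat.
Proof.
  intros [N [I C]]. rewrite count_occ_map_count_in. destruct tau as [y b]. simpl.
  assert (E0 := proj1 Hf).
  destruct (in_dec X_eq_dec y E) as [Hy|Hy]; [destruct b|].
  - rewrite (count_in_ext _ (in_gap E y)); [apply C; auto|]. intros x _. unfold cut_type, in_gap.
    destruct (in_dec X_eq_dec x E); split; intros H; inversion H; subst; auto; tauto.
  - rewrite (count_in_ext _ (fun x => x = y)), count_in_eq; auto. intros x _. unfold cut_type.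
    destruct (in_dec X_eq_dec x E); split; intros H; inversion H; subst; auto; tauto.
  - rewrite count_in_none; auto. intros x _. unfold cut_type.
    destruct (in_dec X_eq_dec x E); intros H; inversion H; subst; auto.
    apply Hy, floor_in_In; auto.
Qed.

Lemma inversion_parity_adapted S S' : adapted E S -> adapted E S' ->
  pair_parity (inversion f) S = pair_parity (inversion f) S'.
Proof.
  intros G G'.
  apply (pair_parity_count_mod4 X (X * bool) X_bool_eq_dec cut_type);
    [intros; apply inversion_sym; auto | exact inversion_cut_type | apply G | apply G' |].
  intros tau. now rewrite (count_cut_type S tau G), (count_cut_type S' tau G').
Qed.

End Inversions.

(* [false] (a junk value) when [f] has no finite set of cuts. *)
Definition signature (f : Xmap) : bool :=
  match excluded_middle_informative
          (exists ES : list X * list X, cuts f (fst ES) /\ adapted (fst ES) (snd ES)) with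
  | left H => pair_parity (inversion f) (snd (proj1_sig (constructive_indefinite_description _ H)))
  | right _ => false
  end.

(* Two cut sets are compared through their union, to which both samples can be refined. *)
Lemma signature_adapted f E S : Injective f -> cuts f E -> adapted E S ->
  signature f = pair_parity (inversion f) S.
Proof.
  intros Hi Hf G. unfold signature.
  destruct (excluded_middle_informative _) as [H|H]; [|exfalso; apply H; exists (E, S); auto].
  destruct (constructive_indefinite_description _ H) as [[E1 S1] [Hf1 G1]]. simpl.
  assert (Hf2 : cuts f (E1 ++ E)).
  { split; [apply in_or_app; left; apply Hf1|].
    intros x Hx. apply Hf1. intros Hx1. apply Hx, in_or_app. auto. }
  destruct (adapted_exists (E1 ++ E) (proj1 Hf2)) as [S2 G2].
  transitivity (pair_parity (inversion f) S2).
  - apply (inversion_parity_adapted f E1); auto.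
    apply (adapted_refine E1 (E1 ++ E)); [apply Hf1 | intros a Ha; apply in_or_app | ]; auto.
  - symmetry. apply (inversion_parity_adapted f E); auto.
    apply (adapted_refine E (E1 ++ E)); [apply Hf | intros a Ha; apply in_or_app | ]; auto.
Qed.

Lemma in_gap_image h E E' e x y : cuts h E -> Injective h -> In pt0 E' ->
  (forall a, In a E' <-> exists b, h b = a /\ In b E) ->
  in_gap E e x -> in_gap E e y -> in_gap E' (floor_in E' (h x)) (h y).
Proof.
  intros Hh Hi E0' HE' Gx Gy. split.
  - intros Hy. apply HE' in Hy as [b [Hb Hb']]. apply Hi in Hb. subst b. apply Gy, Hb'.
  - assert (K : forall a b, in_gap E e a -> in_gap E e b -> xval a <= xval b ->
              forall c, In c E' -> ~ lies_between (xval c) (xval (h a)) (xval (h b))).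
    { intros a b Ga Gb Hab c Hc Hbw. apply HE' in Hc as [c0 [<- Hc0]].
      destruct (gap_IVT h E Hh e a b _ Ga Gb Hab Hbw) as [z [Hz Hhz]].
      assert (z = c0) by (apply Hi, xval_inj; auto). subst z.
      apply (in_gap_convex E e a b c0 (proj1 Hh) Ga Gb Hz), Hc0. }
    destruct (Rle_dec (xval x) (xval y)), (Rle_dec (xval (h x)) (xval (h y))).
    + symmetry. apply floor_in_eq_of_no_cut; auto.
      intros c Hc Hb. apply (K x y Gx Gy r c Hc). left; auto.
    + apply floor_in_eq_of_no_cut; auto; [lra|].
      intros c Hc Hb. apply (K x y Gx Gy r c Hc). right; auto.
    + symmetry. apply floor_in_eq_of_no_cut; auto.
      intros c Hc Hb. apply (K y x Gy Gx ltac:(lra) c Hc). right; auto.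
    + apply floor_in_eq_of_no_cut; auto; [lra|].
      intros c Hc Hb. apply (K y x Gy Gx ltac:(lra) c Hc). left; auto.
Qed.

Lemma adapted_image h hi E S : is_inverse h hi -> cuts h E -> cuts hi (map h E) -> adapted E S ->
  adapted (map h E) (map h S).
Proof.
  intros Hinv Hh Hhi [N [I C]].
  pose proof (is_inverse_injective h hi Hinv) as Hi.
  pose proof (is_inverse_injective hi h (is_inverse_sym h hi Hinv)) as Hi'.
  destruct Hinv as [Hh1 Hh2].
  assert (E0 : In pt0 E) by apply Hh. assert (E0' : In pt0 (map h E)) by apply Hhi.
  split; [|split].
  - apply Injective_map_NoDup; auto.
  - intros a Ha. apply in_map_iff in Ha as [e [<- He]]. apply in_map, I, He.
  - intros c Hc.
    destruct (gap_nonempty (map h E) c E0' Hc) as [z Gz].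
    assert (Gx0 : in_gap E (floor_in E (hi z)) (hi z)).
    { split; auto. intros Hx0. apply (proj1 Gz). rewrite <- (Hh2 z). apply in_map, Hx0. }
    rewrite count_in_map.
    erewrite count_in_ext; [apply (C (floor_in E (hi z))), floor_in_In, E0|].
    intros x _. split; intros Gx.
    + rewrite <- (Hh1 x).
      apply (in_gap_image hi (map h E) E c); auto.
      intros a. split; [intros Ha; exists (h a); split; [apply Hh1 | apply in_map, Ha]|].
      intros [b [<- Hb]]. apply in_map_iff in Hb as [a [<- Ha]]. rewrite Hh1. exact Ha.
    + rewrite <- (proj2 Gz), <- (Hh2 z).
      apply (in_gap_image h E (map h E) (floor_in E (hi z))); auto.
      intros a. rewrite in_map_iff. reflexivity.
Qed.

Definition pc (f : Xmap) : Prop := exists F : list X, forall x, ~ In x F -> cont_at f x.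

Definition pc_bij (f : Xmap) : Prop := exists fi, is_inverse f fi /\ pc f /\ pc fi.

Lemma cont_at_comp g h x : cont_at h x -> cont_at g (h x) -> cont_at (comp g h) x.
Proof.
  intros Hh Hg eps He. destruct (Hg eps He) as [d1 [Hd1 H1]].
  destruct (Hh d1 Hd1) as [d2 [Hd2 H2]]. exists d2. split; auto.
  intros y Hy. apply H1, H2, Hy.
Qed.

(* Sample [S] adapted to a common refinement [E] of the cuts of [h] and the [h]-preimage of the
   cuts of [g]; then [h S] is adapted to [h E], and [inversion] is a cocycle. *)
Lemma signature_comp g h : pc_bij g -> pc_bij h ->
  signature (comp g h) = xorb (signature g) (signature h).
Proof.
  intros [gi [Hg [[Eg Hcg] _]]] [hi [Hh [[Eh Hch] [Ehi Hchi]]]].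
  pose proof (is_inverse_injective g gi Hg) as Ig.
  pose proof (is_inverse_injective h hi Hh) as Ih. destruct Hh as [Hh1 Hh2].
  set (E := pt0 :: hi pt0 :: Eh ++ map hi Eg ++ map hi Ehi).
  assert (HE : forall x, ~ In x E -> ~ In x Eh /\ ~ In (h x) Eg /\ ~ In (h x) Ehi).
  { intros x Hx. repeat split; intros H; apply Hx; unfold E; right; right; rewrite !in_app_iff;
      [left | right; left | right; right]; [exact H | rewrite <- (Hh1 x); apply in_map, H ..]. }
  assert (HhE : forall y, ~ In y (map h E) -> ~ In y Eg /\ ~ In y Ehi).
  { intros y Hy. split; intros H; apply Hy; rewrite <- (Hh2 y); apply in_map; unfold E;
      right; right; rewrite !in_app_iff; auto using in_map. }
  assert (E0' : In pt0 (map h E)) by (rewrite <- (Hh2 pt0); apply in_map; right; left; auto).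
  assert (Ch : cuts h E) by (split; [left; auto | intros x Hx; apply Hch, HE, Hx]).
  assert (Cgh : cuts (comp g h) E).
  { split; [left; auto|]. intros x Hx. destruct (HE x Hx) as [? [? _]]. apply cont_at_comp; auto. }
  assert (Cg : cuts g (map h E)) by (split; auto; intros y Hy; apply Hcg, HhE, Hy).
  assert (Chi : cuts hi (map h E)) by (split; auto; intros y Hy; apply Hchi, HhE, Hy).
  destruct (adapted_exists E (proj1 Ch)) as [S G].
  assert (Igh : Injective (comp g h)) by (intros x y Hxy; apply Ih, Ig, Hxy).
  rewrite (signature_adapted (comp g h) E S Igh Cgh G), (signature_adapted h E S Ih Ch G),
    (signature_adapted g (map h E) (map h S) Ig Cg
       (adapted_image h hi E S (conj Hh1 Hh2) Ch Chi G)).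
  rewrite (pair_parity_ext_in _ (fun x y => xorb (inversion h x y) (inversion g (h x) (h y))))
    by (intros; apply inversion_comp).
  rewrite pair_parity_xorb, pair_parity_map. apply xorb_comm.
Qed.

(** * Finitely supported permutations *)

Lemma swap_l a b : swap a b a = b.
Proof. unfold swap. destruct (Req_EM_T (xval a) (xval a)); [reflexivity | congruence]. Qed.

Lemma swap_r a b : swap a b b = a.
Proof.
  unfold swap. destruct (Req_EM_T (xval b) (xval a)) as [h|h]; [apply xval_inj in h; now subst|].
  destruct (Req_EM_T (xval b) (xval b)); [reflexivity | congruence].
Qed.

Lemma swap_other a b z : z <> a -> z <> b -> swap a b z = z.
Proof.
  intros ha hb. unfold swap.
  destruct (Req_EM_T (xval z) (xval a)) as [h|h]; [apply xval_inj in h; congruence|].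
  destruct (Req_EM_T (xval z) (xval b)) as [h'|h'];
    [apply xval_inj in h'; congruence | reflexivity].
Qed.

Lemma swap_involutive a b x : swap a b (swap a b x) = x.
Proof.
  destruct (X_eq_dec x a) as [->|na]; [now rewrite swap_l, swap_r|].
  destruct (X_eq_dec x b) as [->|nb]; [now rewrite swap_r, swap_l|].
  now rewrite !(swap_other a b x).
Qed.

Lemma swap_inverse a b : is_inverse (swap a b) (swap a b).
Proof. split; intros; apply swap_involutive. Qed.

Lemma swap_support a b x : swap a b x <> x -> In x [a; b].
Proof.
  intros H. destruct (X_eq_dec x a) as [->|na]; [left; auto|].
  destruct (X_eq_dec x b) as [->|nb]; [right; left; auto|].
  exfalso. apply H, swap_other; auto.
Qed.

Lemma away_from (x : X) l : ~ In x l ->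
  exists d, 0 < d /\ forall a, In a l -> d <= Rabs (xval a - xval x).
Proof.
  induction l as [|a l IH]; intros Hx.
  - exists 1. split; [lra | intros a []].
  - destruct IH as [d [Hd H]]; [intros h; apply Hx; right; auto|].
    assert (na : xval a <> xval x) by (intros h; apply Hx; left; apply xval_inj; auto).
    exists (Rmin d (Rabs (xval a - xval x))). split.
    + apply Rmin_pos; auto. apply Rabs_pos_lt. lra.
    + intros b [<-|Hb]; [apply Rmin_r|].
      pose proof (H b Hb). pose proof (Rmin_l d (Rabs (xval a - xval x))). lra.
Qed.

Lemma cont_at_off_support f l : (forall x, f x <> x -> In x l) -> forall x, ~ In x l -> cont_at f x.
Proof.
  intros Hs x Hx e He.
  destruct (away_from x l Hx) as [d [Hd H]].
  exists (Rmin d e). split; [apply Rmin_pos; auto|].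
  intros y Hy. pose proof (Rmin_l d e). pose proof (Rmin_r d e).
  assert (fx : f x = x) by (destruct (X_eq_dec (f x) x); auto; exfalso; apply Hx, Hs; auto).
  assert (fy : f y = y).
  { destruct (X_eq_dec (f y) y) as [h|h]; auto. exfalso. pose proof (H y (Hs y h)). lra. }
  rewrite fx, fy. lra.
Qed.

Lemma pc_of_support f l : (forall x, f x <> x -> In x l) -> pc f.
Proof. intros Hs. exists l. apply (cont_at_off_support f l Hs). Qed.

Lemma S_fin_inverse f fi : S_fin f -> is_inverse f fi -> S_fin fi.
Proof.
  intros [_ [l Hl]] [H1 H2]. split; [exists f; split; auto|].
  exists (map f l). intros x Hx. rewrite <- (H2 x). apply in_map, Hl.
  rewrite H2. intros E. apply Hx. symmetry. exact E.
Qed.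

Lemma S_fin_pc_bij f : S_fin f -> pc_bij f.
Proof.
  intros Hf. pose proof Hf as [[fi Hfi] [l Hl]].
  destruct (S_fin_inverse f fi Hf Hfi) as [_ [l' Hl']].
  exists fi. split; [auto | split; eapply pc_of_support; eauto].
Qed.

Lemma S_fin_swap a b : S_fin (swap a b).
Proof. split; [exists (swap a b); apply swap_inverse | exists [a; b]; apply swap_support]. Qed.

Lemma pair_parity_swap a b S : a <> b -> NoDup S -> In a S -> In b S ->
  pair_parity (inversion (swap a b)) S = true.
Proof.
  intros nab N Ha Hb.
  apply in_split in Ha as [l1 [l2 ->]].
  assert (Hb' : In b (l1 ++ l2)) by (rewrite in_app_iff in *; simpl in Hb; intuition congruence).
  apply in_split in Hb' as [m1 [m2 Em]].
  assert (P : Permutation (l1 ++ a :: l2) (a :: b :: m1 ++ m2)).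
  { eapply perm_trans; [apply Permutation_sym, Permutation_middle|].
    apply perm_skip. rewrite Em. apply Permutation_sym, Permutation_middle. }
  assert (Hi : Injective (swap a b)) by apply (is_inverse_injective _ _ (swap_inverse a b)).
  rewrite (pair_parity_perm _ _ _ (fun x y => inversion_sym _ x y Hi) P).
  apply (Permutation_NoDup P) in N.
  inversion N as [|? ? Na N1]; inversion N1 as [|? ? Nb _]; subst.
  assert (Out : forall z, In z (m1 ++ m2) -> swap a b z = z)
    by (intros z Hz; apply swap_other; intros ->; [apply Na; right | apply Nb]; auto).
  cbn [pair_parity map parity].
  assert (Hab : inversion (swap a b) a b = true).
  { unfold inversion, Rltb. rewrite swap_l, swap_r. pose proof (xval_neq _ _ nab).
    destruct (Rlt_dec (xval a) (xval b)), (Rlt_dec (xval b) (xval a)); try reflexivity; lra. }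
  assert (Hrow : map (inversion (swap a b) b) (m1 ++ m2) = map (inversion (swap a b) a) (m1 ++ m2)).
  { apply map_ext_in. intros z Hz. unfold inversion. rewrite swap_l, swap_r, (Out z Hz).
    destruct (Rltb (xval a) (xval z)), (Rltb (xval b) (xval z)); reflexivity. }
  rewrite Hrow, Hab, pair_parity_false.
  - destruct (parity (map (inversion (swap a b) a) (m1 ++ m2))); reflexivity.
  - intros x y Hx Hy. unfold inversion. rewrite (Out x Hx), (Out y Hy). apply xorb_nilpotent.
Qed.

Lemma signature_swap a b : a <> b -> signature (swap a b) = true.
Proof.
  intros nab.
  assert (C : cuts (swap a b) [pt0; a; b]).
  { split; [left; auto|]. intros x Hx.
    apply (cont_at_off_support _ _ (swap_support a b)). intros H; apply Hx; right; auto. }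
  destruct (adapted_exists _ (proj1 C)) as [S G].
  rewrite (signature_adapted _ _ S (is_inverse_injective _ _ (swap_inverse a b)) C G).
  destruct G as [N [I _]]. apply pair_parity_swap; auto; apply I; simpl; auto.
Qed.

Lemma signature_id : signature (fun x => x) = false.
Proof.
  assert (C : cuts (fun x => x) [pt0]).
  { split; [left; auto|]. intros x _ e He. exists e; split; auto. }
  destruct (adapted_exists _ (proj1 C)) as [S G].
  rewrite (signature_adapted _ _ S (fun x y h => h) C G). apply pair_parity_false.
  intros; unfold inversion. apply xorb_nilpotent.
Qed.

Definition swaps (L : list (X * X)) : Xmap :=
  fun x => fold_right (fun p y => swap (fst p) (snd p) y) x L.

Lemma swaps_app L1 L2 x : swaps (L1 ++ L2) x = swaps L1 (swaps L2 x).
Proof. apply fold_right_app. Qed.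

Lemma swaps_inverse L : is_inverse (swaps L) (swaps (rev L)).
Proof.
  induction L as [|[a b] L [IH1 IH2]]; [split; intros; reflexivity|].
  split; intros x; simpl rev; rewrite swaps_app; simpl.
  - rewrite swap_involutive. apply IH1.
  - rewrite IH2. apply swap_involutive.
Qed.

Lemma S_fin_swaps L : S_fin (swaps L).
Proof.
  split; [eexists; apply swaps_inverse|].
  exists (flat_map (fun p => [fst p; snd p]) L).
  induction L as [|[a b] L IH]; intros x H; [simpl in H; congruence|].
  change (swaps ((a, b) :: L) x) with (swap a b (swaps L x)) in H.
  simpl flat_map. destruct (X_eq_dec (swaps L x) x) as [E|E].
  - rewrite E in H. apply swap_support in H. simpl in *. tauto.
  - right; right. auto.
Qed.

Lemma signature_swaps L : (forall p, In p L -> fst p <> snd p) ->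
  signature (swaps L) = Nat.odd (length L).
Proof.
  induction L as [|[a b] L IH]; intros Hd; [apply signature_id|].
  change (swaps ((a, b) :: L)) with (comp (swap a b) (swaps L)).
  rewrite signature_comp by (apply S_fin_pc_bij; apply S_fin_swap || apply S_fin_swaps).
  rewrite signature_swap by (apply (Hd (a, b)); left; auto).
  rewrite IH by (intros; apply Hd; right; auto).
  simpl length. rewrite Nat.odd_succ, <- Nat.negb_odd. reflexivity.
Qed.

Lemma swaps_of_support n (rho : Xmap) l : (length l <= n)%nat -> Injective rho ->
  (forall x, rho x <> x -> In x l) ->
  exists L, (forall p, In p L -> fst p <> snd p) /\ forall x, rho x = swaps L x.
Proof.
  revert rho l. induction n as [|n IH]; intros rho l Hn Hi Hs.
  - exists []. split; [intros p []|]. intros x. destruct (X_eq_dec (rho x) x); auto.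
    destruct l; [destruct (Hs x n) | simpl in Hn; lia].
  - destruct (classic (exists x, rho x <> x)) as [[x Hx]|Hno].
    + set (y := rho x).
      assert (nxy : x <> y) by (intros h; apply Hx; symmetry; exact h).
      set (rho' := fun z => swap x y (rho z)).
      assert (Hi' : Injective rho')
        by (intros u v h; apply Hi, (is_inverse_injective _ _ (swap_inverse x y)), h).
      assert (Hs' : forall z, rho' z <> z -> In z (remove X_eq_dec x l)).
      { intros z hz. unfold rho' in hz.
        assert (zx : z <> x) by (intros ->; apply hz, swap_r).
        assert (rz : rho z <> z).
        { intros h. rewrite h in hz. apply hz, swap_other; auto.
          intros ->. apply zx, Hi. exact h. }
        apply in_in_remove; auto. }
      destruct (IH rho' (remove X_eq_dec x l)) as [L [HL1 HL2]]; auto.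
      { pose proof (remove_length_lt X_eq_dec l x (Hs x Hx)). lia. }
      exists ((x, y) :: L). split.
      * intros p [<-|Hp]; auto.
      * intros z. change (swaps ((x, y) :: L) z) with (swap x y (swaps L z)).
        rewrite <- HL2. unfold rho'. rewrite swap_involutive. reflexivity.
    + exists []. split; [intros p []|]. intros x.
      destruct (X_eq_dec (rho x) x); auto. exfalso; eauto.
Qed.

Lemma A_fin_of_signature f : S_fin f -> signature f = false -> A_fin f.
Proof.
  intros [[fi Hfi] [l Hl]] Hsig.
  destruct (swaps_of_support (length l) f l (le_n _) (is_inverse_injective _ _ Hfi) Hl)
    as [L [HL Hf]].
  assert (Ef : f = swaps L) by (extensionality x; apply Hf).
  rewrite Ef, signature_swaps in Hsig by exact HL.
  exists L. repeat split; auto.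
  apply Nat.even_spec. rewrite <- Nat.negb_odd, Hsig. reflexivity.
Qed.

(** * The section *)

Lemma S_fin_id : S_fin (fun x => x).
Proof. split; [exists (fun x => x); split; auto | exists []; intros x H; now exfalso]. Qed.

Lemma S_fin_comp f g : S_fin f -> S_fin g -> S_fin (comp f g).
Proof.
  intros [[fi Hf] [l Hl]] [[gi Hg] [l' Hl']].
  split; [exists (comp gi fi); apply is_inverse_comp; auto|].
  exists (l' ++ l). intros x Hx. apply in_or_app. unfold comp in Hx.
  destruct (X_eq_dec (g x) x) as [E|E]; [right; apply Hl; rewrite E in Hx | left; apply Hl']; auto.
Qed.

Lemma S_fin_conj f h hi : S_fin f -> is_inverse h hi -> S_fin (comp hi (comp f h)).
Proof.
  intros [[fi Hf] [l Hl]] [H1 H2].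
  split.
  { exists (comp hi (comp fi h)).
    destruct Hf as [F1 F2]. unfold comp. split; intros x; rewrite H2, ?F1, ?F2, H1; auto. }
  exists (map hi l). intros x Hx. unfold comp in Hx.
  rewrite <- (H1 x). apply in_map, Hl. intros E. apply Hx. rewrite E. apply H1.
Qed.

Lemma cong_S_fin_right g gi sigma : is_inverse g gi -> S_fin sigma ->
  cong_mod S_fin g (comp g sigma).
Proof.
  intros Hg Hs. exists gi. split; auto.
  replace (comp gi (comp g sigma)) with sigma; auto.
  extensionality x. symmetry. apply Hg.
Qed.

Lemma cong_S_fin_sym a b : cong_mod S_fin a b -> cong_mod S_fin b a.
Proof.
  intros [ai [Ha Hs]]. pose proof Hs as [[si Hsi] _].
  assert (Eb : b = comp a (comp ai b)) by (extensionality x; symmetry; apply Ha).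
  exists (comp si ai). split.
  - rewrite Eb at 1. apply is_inverse_comp; auto.
  - replace (comp (comp si ai) a) with si; [apply (S_fin_inverse _ _ Hs Hsi)|].
    extensionality x. unfold comp. now rewrite (proj1 Ha).
Qed.

Lemma cong_S_fin_trans a b c : cong_mod S_fin a b -> cong_mod S_fin b c -> cong_mod S_fin a c.
Proof.
  intros [ai [Ha Hab]] [bi [Hb Hbc]]. exists ai. split; auto.
  replace (comp ai c) with (comp (comp ai b) (comp bi c)); [apply S_fin_comp; auto|].
  extensionality x. unfold comp. now rewrite (proj2 Hb).
Qed.

Lemma cong_S_fin_comp a a' b b' : cong_mod S_fin a a' -> cong_mod S_fin b b' ->
  cong_mod S_fin (comp a b) (comp a' b').
Proof.
  intros [ai [Ha Haa]] [bi [Hb Hbb]]. exists (comp bi ai). split; [apply is_inverse_comp; auto|].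
  replace (comp (comp bi ai) (comp a' b')) with (comp (comp bi (comp (comp ai a') b)) (comp bi b')).
  - apply S_fin_comp; auto. apply S_fin_conj; auto.
  - extensionality x. unfold comp. now rewrite (proj2 Hb).
Qed.

Lemma cong_A_fin_of_signature a b : pc_bij a -> cong_mod S_fin a b ->
  signature a = signature b -> cong_mod A_fin a b.
Proof.
  intros Pa [ai [Ha Hs]] Hab. exists ai. split; auto.
  apply A_fin_of_signature; auto.
  assert (Eb : b = comp a (comp ai b)) by (extensionality x; symmetry; apply Ha).
  rewrite Eb, signature_comp in Hab by (auto using S_fin_pc_bij).
  destruct (signature a), (signature (comp ai b)); auto.
Qed.

Definition pt_half : X := clampX (1 / 2).

Lemma pt0_neq_pt_half : pt0 <> pt_half.
Proof.
  intros h. apply (f_equal xval) in h. unfold pt_half in h.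
  rewrite clampX_val in h by lra. simpl in h. lra.
Qed.

Definition even_rep (g : Xmap) : Xmap :=
  if signature g then comp g (swap pt0 pt_half) else g.

Lemma even_rep_cong g : is_bij g -> cong_mod S_fin g (even_rep g).
Proof.
  intros [gi Hgi]. unfold even_rep. destruct (signature g).
  - apply (cong_S_fin_right g gi); auto. apply S_fin_swap.
  - apply (cong_S_fin_right g gi (fun x => x)); auto. apply S_fin_id.
Qed.

Lemma even_rep_signature g : pc_bij g -> signature (even_rep g) = false.
Proof.
  intros Pg. unfold even_rep. destruct (signature g) eqn:Eg; auto.
  rewrite signature_comp, Eg, signature_swap by
    (apply pt0_neq_pt_half || apply S_fin_pc_bij, S_fin_swap || exact Pg).
  reflexivity.
Qed.

Lemma subgroup_PC_hat_pc_bij H g : subgroup_PC_hat H -> H g -> pc_bij g.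
Proof.
  intros [HPC [_ [_ Hinv]]] Hg. destruct (HPC g Hg) as [[gi Hgi] Pg].
  exists gi. split; [auto | split; [exact Pg | exact (proj2 (HPC gi (Hinv g gi Hg Hgi)))]].
Qed.

Theorem corollary1p2 (Ghat : Xmap -> Prop) :
  subgroup_PC_hat Ghat ->
  (forall f, S_fin f -> Ghat f) ->
  kapoudjian_split Ghat.
Proof.
  intros HG HS. pose proof HG as [HPC [_ [Hcomp _]]].
  assert (Gpc : forall g, Ghat g -> pc_bij g) by (intros g; apply subgroup_PC_hat_pc_bij, HG).
  assert (Geven : forall g, Ghat g -> Ghat (even_rep g)).
  { intros g Hg. unfold even_rep. destruct (signature g); auto.
    apply Hcomp; [exact Hg | apply HS, S_fin_swap]. }
  assert (Gcong : forall g, Ghat g -> cong_mod S_fin g (even_rep g))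
    by (intros g Hg; apply even_rep_cong, (HPC g Hg)).
  exists even_rep. split; [exact Geven | split; [|split; [|exact Gcong]]].
  - intros g g' Hg Hg' Hgg'.
    apply cong_A_fin_of_signature; [auto | | rewrite !even_rep_signature; auto].
    apply (cong_S_fin_trans _ g); [apply cong_S_fin_sym; auto|].
    apply (cong_S_fin_trans _ g'); auto.
  - intros g h Hg Hh.
    apply cong_A_fin_of_signature; [auto | | rewrite signature_comp, !even_rep_signature; auto].
    apply (cong_S_fin_trans _ (comp g h)); [apply cong_S_fin_sym; auto|].
    apply cong_S_fin_comp; auto.
Qed.
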